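(* Let $\mathcal G=(\mathcal N,E)$ be an undirected graph on $N$ nodes with adjacency-type matrix $A$ (defined in the context), and let $x^\star$ be any solution of the fractional dominating set linear program $$\min_{x\in\mathbb R^N}\mathbf 1^\top x\quad\text{s.t.}\quad Ax\ge\mathbf 1,\ x\ge 0.$$ Run Algorithm 1 (described in the context) with an arbitrary $\delta>0$ and $\alpha=\frac{\delta}{2(d_{\max}+1)^2}$. Then for every $k=0,1,2,\dots$ the iterate $x^{(k)}=(x^{(k)}_1,\dots,x^{(k)}_N)^\top$ is feasible for this linear program (i.e. $Ax^{(k)}\ge\mathbf 1$ and $x^{(k)}\ge 0$), and $$\frac{\mathbf 1^\top x^{(k)}-\mathbf 1^\top x^\star}{\mathbf 1^\top x^\star}\le 32(d_{\max}+1)^3\Big(1+\frac1\delta\Big)\frac{1}{(k+1)^2}+\frac{\delta}{2}.$$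
   Context: $A$ is the $N\times N$ symmetric matrix with $A_{ii}=1$ for all $i$ and, for $i\ne j$, $A_{ij}=1$ if $\{i,j\}\in E$, $A_{ij}=0$ otherwise. $\Omega_i$ is the closed one-hop neighborhood of node $i$ (its neighbors together with $i$). $d_{\max}$ is the maximal degree of $\mathcal G$, where the degree of $i$ is its number of neighbors excluding $i$, i.e. $|\Omega_i|-1$. $\mathbf 1$ is the all-ones vector, $[c]_+=\max\{0,c\}$, and $\mathcal P_{[0,1]}(c)=\min\{1,\max\{0,c\}\}$. Algorithm 1: initialize $\lambda_i^{(0)}=0$ and $z_i^{(-1)}=0$ for all $i$ (the value of $\overline x_j^{(-1)}$ is irrelevant since it is multiplied by $0$). For $k=0,1,2,\dots$, each node $i$ computes $$\widehat x_i^{(k)}=\mathcal P_{[0,1]}\Big(\tfrac1\delta\big(\textstyle\sum_{j\in\Omega_i}\lambda_j^{(k)}-1\big)\Big),$$ and then $$z_i^{(k)}=z_i^{(k-1)}+\tfrac{k+1}{2}\Big(1-\textstyle\sum_{j\in\Omega_i}\widehat x_j^{(k)}\Big),\qquad \mu_i^{(k)}=\Big[\lambda_i^{(k)}+\alpha\big(1-\textstyle\sum_{j\in\Omega_i}\widehat x_j^{(k)}\big)\Big]_+,$$ $$\lambda_i^{(k+1)}=\tfrac{k+1}{k+3}\mu_i^{(k)}+\tfrac{2}{k+3}\,\alpha\,[z_i^{(k)}]_+,\qquad \overline x_j^{(k)}=\tfrac{k}{k+2}\overline x_j^{(k-1)}+\tfrac{2}{k+2}\widehat x_j^{(k)},$$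 $$x_i^{(k)}=\overline x_i^{(k)}+\Big[1-\textstyle\sum_{j\in\Omega_i}\overline x_j^{(k)}\Big]_+ .$$ *)

From mathcomp Require Import all_boot all_order all_algebra.
Set Implicit Arguments. Unset Strict Implicit. Unset Printing Implicit Defensive.
Import Order.TTheory GRing.Theory Num.Theory.
Local Open Scope ring_scope.

Section Defs.
Variable R : realFieldType.
Variable N : nat.

Definition simple_graph (e : rel 'I_N) : Prop :=
  (forall i j, e i j = e j i) /\ (forall i, ~~ e i i).

Definition Omega (e : rel 'I_N) (i : 'I_N) : {set 'I_N} :=
  [set j | (j == i) || e i j].

Definition dmax (e : rel 'I_N) : nat := \max_(i : 'I_N) (#|Omega e i|).-1.

Definition adjA (e : rel 'I_N) : 'M[R]_N :=
  \matrix_(i, j) (if (i == j) || e i j then 1 else 0).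

Definition lp_feasible (e : rel 'I_N) (x : 'I_N -> R) : Prop :=
  (forall i, 1 <= \sum_(j < N) adjA e i j * x j) /\ (forall i, 0 <= x i).

Definition lp_cost (x : 'I_N -> R) : R := \sum_(i < N) x i.

Definition lp_optimal (e : rel 'I_N) (x : 'I_N -> R) : Prop :=
  lp_feasible e x /\ forall y, lp_feasible e y -> lp_cost x <= lp_cost y.

Definition pos (c : R) : R := Num.max 0 c.
Definition proj01 (c : R) : R := Num.min 1 (Num.max 0 c).

(* state at the beginning of iteration k: (lambda^(k), z^(k-1), xbar^(k-1)) *)
Record alg_state := AlgState {
  st_lambda : 'I_N -> R;
  st_z : 'I_N -> R;
  st_xbar : 'I_N -> R }.

Definition nsum (e : rel 'I_N) (v : 'I_N -> R) (i : 'I_N) : R :=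
  \sum_(j in Omega e i) v j.

Definition xhat (e : rel 'I_N) (delta : R) (lam : 'I_N -> R) (i : 'I_N) : R :=
  proj01 (delta^-1 * (nsum e lam i - 1)).

Definition alg_step (e : rel 'I_N) (delta alpha : R) (k : nat) (s : alg_state)
  : alg_state :=
  let xh := xhat e delta (st_lambda s) in
  let z' := fun i => st_z s i + (k.+1)%:R / 2 * (1 - nsum e xh i) in
  let mu := fun i => pos (st_lambda s i + alpha * (1 - nsum e xh i)) in
  let lam' := fun i => (k.+1)%:R / (k.+3)%:R * mu i
                       + 2 / (k.+3)%:R * (alpha * pos (z' i)) in
  let xb' := fun j => k%:R / (k.+2)%:R * st_xbar s j + 2 / (k.+2)%:R * xh j in
  AlgState lam' z' xb'.

(* lambda^(0) = 0, z^(-1) = 0, xbar^(-1) irrelevant (set to 0) *)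
Fixpoint alg_state_at (e : rel 'I_N) (delta alpha : R) (k : nat) : alg_state :=
  match k with
  | 0 => AlgState (fun _ => 0) (fun _ => 0) (fun _ => 0)
  | k'.+1 => alg_step e delta alpha k' (alg_state_at e delta alpha k')
  end.

Definition xbar (e : rel 'I_N) (delta alpha : R) (k : nat) : 'I_N -> R :=
  st_xbar (alg_state_at e delta alpha k.+1).

Definition alg_x (e : rel 'I_N) (delta alpha : R) (k : nat) (i : 'I_N) : R :=
  xbar e delta alpha k i + pos (1 - nsum e (xbar e delta alpha k) i).

End Defs.

(* Algorithm 1 is Nesterov's accelerated projected gradient ascent on the dual
   of the regularised problem
     min sum_i (x_i + delta/2 x_i^2)   s.t.   A x >= 1,  0 <= x <= 1,
   whose Lagrangian is minimised over the box by xhat(lambda).  The dual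
   function q is concave and its gradient 1 - A xhat(lambda) is Lipschitz with
   constant |A|^2/delta <= (dmax+1)^2/delta = 1/(2 alpha).  With the weights
   A_k = (k+1)(k+2)/4, the estimate-sequence invariant psi_k(lambda) <= A_k q(mu^(k))
   holds for every lambda >= 0, and the linear part of psi_k is
   z^(k) = A_k (1 - A xbar^(k)).  Evaluating the invariant at a multiple of the
   violation v = [1 - A xbar^(k)]_+ bounds 1'xbar^(k) + A_k alpha/2 |v|^2 by the
   regularised cost of any feasible point of the box, e.g. the truncation of x*,
   which costs at most (1 + delta/2) 1'x*.  The repair 1'v that makes x^(k)
   feasible then costs at most N / (2 A_k alpha), and N <= (dmax+1) 1'x*. *)

From mathcomp Require Import all_boot all_order all_algebra.
From mathcomp Require Import ring lra.
Import Order.TTheory GRing.Theory Num.Theory.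
Set Implicit Arguments. Unset Strict Implicit. Unset Printing Implicit Defensive.
Local Open Scope ring_scope.

Section Scalar.
Variable R : realFieldType.
Implicit Types a c d g l s y : R.

Lemma pos_ge0 c : 0 <= pos c.
Proof. by rewrite /pos le_max lexx. Qed.

Lemma le_pos c : c <= pos c.
Proof. by rewrite /pos le_max lexx orbT. Qed.

Lemma pos_mulr c : pos c * c = pos c ^+ 2.
Proof. by rewrite /pos; case: leP => _; rewrite ?mul0r expr2 ?mul0r. Qed.

Lemma proj01_in01 c : 0 <= proj01 c <= 1.
Proof. by rewrite /proj01 le_min ler01 le_max lexx ge_min lexx. Qed.

Lemma proj01_le c : 0 <= c -> proj01 c <= c.
Proof. by move=> c0; rewrite /proj01 ge_min ge_max c0 lexx orbT. Qed.

Lemma proj01_ge1 c : 1 <= c -> proj01 c = 1.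
Proof. by move=> c1; rewrite /proj01 (max_idPr (le_trans ler01 c1)) (min_idPl c1). Qed.

Lemma proj01_id c : 0 <= c -> c < 1 -> proj01 c = c.
Proof. by move=> c0 c1; rewrite /proj01 (max_idPr c0) (min_idPr (ltW c1)). Qed.

(* Strong convexity of the objective at its minimiser [proj01 c] over [0, 1]. *)
Lemma proj01_strong_min d c s : 0 < d -> 0 <= s <= 1 ->
  d / 2 * (s - proj01 c) ^+ 2 <=
  (s + d / 2 * s ^+ 2 - s * (1 + d * c))
  - (proj01 c + d / 2 * proj01 c ^+ 2 - proj01 c * (1 + d * c)).
Proof.
move=> d0 /andP[s0 s1]; set t := proj01 c.
have -> : (s + d / 2 * s ^+ 2 - s * (1 + d * c))
          - (t + d / 2 * t ^+ 2 - t * (1 + d * c))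
        = d / 2 * (s - t) ^+ 2 + d * ((s - t) * (t - c)) by field.
rewrite lerDl mulr_ge0 ?(ltW d0) // /t /proj01.
by case: (leP c 0) => c0; [case: (leP 1 0) => ?; [lra | nra] | case: (leP c 1) => ?; nra].
Qed.

Lemma mulr_le_young d a b : 0 < d -> a * b <= d / 2 * a ^+ 2 + b ^+ 2 / (2 * d).
Proof.
move=> d0; rewrite -subr_ge0.
have -> : d / 2 * a ^+ 2 + b ^+ 2 / (2 * d) - a * b = d / 2 * (a - b / d) ^+ 2.
  by field; rewrite gt_eqF.
by rewrite mulr_ge0 ?sqr_ge0 // divr_ge0 // ltW.
Qed.

Lemma pos_step_max a l g y : 0 < a -> 0 <= y ->
  g * (y - l) - (2 * a)^-1 * (y - l) ^+ 2 <=
  g * (pos (l + a * g) - l) - (2 * a)^-1 * (pos (l + a * g) - l) ^+ 2.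
Proof.
move=> a0 y0; have ia : 0 < a^-1 by rewrite invr_gt0.
have -> : (2 * a)^-1 = a^-1 / 2 by rewrite invfM mulrC.
rewrite /pos; case: (leP (l + a * g) 0) => h.
  have h1 : g + a^-1 * l <= 0.
    have : a^-1 * (l + a * g) <= 0 by rewrite pmulr_rle0.
    by rewrite mulrDr mulrA mulVf ?gt_eqF // mul1r addrC.
  have h2 : 0 <= a^-1 * y ^+ 2 by rewrite mulr_ge0 ?sqr_ge0 ?ltW.
  by nra.
have -> : g * (y - l) - a^-1 / 2 * (y - l) ^+ 2
        = a * g ^+ 2 / 2 - a^-1 / 2 * (y - l - a * g) ^+ 2.
  by field; rewrite gt_eqF.
have -> : g * (l + a * g - l) - a^-1 / 2 * (l + a * g - l) ^+ 2 = a * g ^+ 2 / 2.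
  by field; rewrite gt_eqF.
by rewrite gerDl oppr_le0 mulr_ge0 ?sqr_ge0 // divr_ge0 // ltW.
Qed.

Lemma pos_quad_max a z y : 0 < a -> 0 <= y ->
  y * z - (2 * a)^-1 * y ^+ 2 <=
  a * pos z * z - (2 * a)^-1 * (a * pos z) ^+ 2 - (2 * a)^-1 * (y - a * pos z) ^+ 2.
Proof.
move=> a0 y0; rewrite /pos; case: (leP z 0) => z0.
  rewrite !mulr0 mul0r expr0n /= mulr0 !subr0 lerD2r.
  by rewrite mulr_ge0_le0.
by rewrite le_eqVlt; apply/orP; left; apply/eqP; field; rewrite gt_eqF.
Qed.

Lemma sqr_avg_le c d u v w : 0 < c + d -> d ^+ 2 <= c + d ->
  (c + d) * ((c * u + d * v) / (c + d) - (c * u + d * w) / (c + d)) ^+ 2 <= (v - w) ^+ 2.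
Proof.
move=> cd0 dcd; have cdn0 : c + d != 0 by rewrite gt_eqF.
rewrite (_ : _ * _ = d ^+ 2 / (c + d) * (v - w) ^+ 2); last by field.
by rewrite ler_piMl ?sqr_ge0 // ler_pdivrMr // mul1r.
Qed.

Lemma sqr_sum_le_card (T : finType) (S : {pred T}) (h : T -> R) :
  (\sum_(j in S) h j) ^+ 2 <= #|S|%:R * \sum_(j in S) h j ^+ 2.
Proof.
have am_gm j k : h j * h k <= (h j ^+ 2 + h k ^+ 2) / 2.
  by rewrite -subr_ge0 (_ : _ - _ = (h j - h k) ^+ 2 / 2) ?divr_ge0 ?sqr_ge0 //; field.
rewrite expr2 mulr_suml.
apply: le_trans (_ : \sum_(j in S) \sum_(k in S) (h j ^+ 2 + h k ^+ 2) / 2 <= _).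
  by apply: ler_sum => j _; rewrite mulr_sumr; apply: ler_sum => k _.
under eq_bigr => j _ do rewrite -mulr_suml big_split /= sumr_const.
rewrite -mulr_suml big_split /= sumr_const sumrMnl -mulr_natl.
by rewrite le_eqVlt; apply/orP; left; apply/eqP; field.
Qed.

End Scalar.

Section Graph.
Variables (R : realFieldType) (N : nat) (e : rel 'I_N).
Hypothesis e_sym : forall i j, e i j = e j i.
Implicit Types u v : 'I_N -> R.

Definition deg1 : R := (dmax e)%:R + 1.

Lemma deg1_ge1 : 1 <= deg1.
Proof. by rewrite lerDr. Qed.

Lemma deg1_gt0 : 0 < deg1.
Proof. exact: lt_le_trans ltr01 deg1_ge1. Qed.

Lemma Omega_self i : i \in Omega e i.
Proof. by rewrite inE eqxx. Qed.

Lemma Omega_sym i j : (j \in Omega e i) = (i \in Omega e j).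
Proof. by rewrite !inE eq_sym e_sym. Qed.

Lemma card_Omega_le i : #|Omega e i|%:R <= deg1.
Proof.
rewrite /deg1 natr1 ler_nat (leq_trans (leqSpred _)) // ltnS.
exact: (leq_bigmax i).
Qed.

Lemma adjA_mulE v i : \sum_j adjA R e i j * v j = nsum e v i.
Proof.
rewrite /nsum [RHS]big_mkcond; apply: eq_bigr => j _.
by rewrite mxE inE eq_sym; case: ifP; rewrite ?mul1r ?mul0r.
Qed.

Lemma nsum_lin c d u v i :
  nsum e (fun j => c * u j + d * v j) i = c * nsum e u i + d * nsum e v i.
Proof. by rewrite /nsum big_split /= -!mulr_sumr. Qed.

Lemma nsumB u v i : nsum e (fun j => u j - v j) i = nsum e u i - nsum e v i.
Proof. by rewrite /nsum sumrB. Qed.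

Lemma nsum_ge_mem u i j :
  j \in Omega e i -> (forall k, 0 <= u k) -> u j <= nsum e u i.
Proof. by move=> jin u0; rewrite /nsum (bigD1 j) //= lerDl sumr_ge0. Qed.

Lemma sum_mul_nsumC u v : \sum_i u i * nsum e v i = \sum_i v i * nsum e u i.
Proof.
rewrite /nsum; under eq_bigr do rewrite mulr_sumr big_mkcond /=.
rewrite exchange_big /=; apply: eq_bigr => j _.
rewrite mulr_sumr [RHS]big_mkcond /=; apply: eq_bigr => i _.
by rewrite Omega_sym; case: ifP; rewrite // mulrC.
Qed.

Lemma sum_nsum_le u : (forall j, 0 <= u j) -> \sum_i nsum e u i <= deg1 * \sum_i u i.
Proof.
move=> u0; under eq_bigr do rewrite -[nsum _ _ _]mul1r.
rewrite (sum_mul_nsumC (fun=> 1)) mulr_sumr; apply: ler_sum => i _.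
rewrite mulrC ler_wpM2r //; apply: le_trans (card_Omega_le i).
by rewrite /nsum sumr_const -[X in X <= _]mulr_natl mulr1.
Qed.

Lemma sum_sqr_nsum_le u : \sum_i nsum e u i ^+ 2 <= deg1 ^+ 2 * \sum_i u i ^+ 2.
Proof.
apply: le_trans (_ : \sum_i deg1 * nsum e (fun j => u j ^+ 2) i <= _).
  apply: ler_sum => i _; apply: le_trans (sqr_sum_le_card (Omega e i) u) _.
  by rewrite ler_wpM2r ?card_Omega_le ?sumr_ge0 // => j _; rewrite sqr_ge0.
rewrite -mulr_sumr expr2 -mulrA ler_wpM2l ?(ltW deg1_gt0) //.
by apply: sum_nsum_le => j; rewrite sqr_ge0.
Qed.

Lemma card_le_cost x : lp_feasible e x -> N%:R <= deg1 * lp_cost x.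
Proof.
move=> [x1 x0]; apply: le_trans (sum_nsum_le x0).
rewrite -[N in N%:R]card_ord -sumr_const; apply: ler_sum => i _.
by rewrite -adjA_mulE.
Qed.

End Graph.

Lemma nsum_proj01_ge1 (R : realFieldType) N (e : rel 'I_N) (x : 'I_N -> R) :
  lp_feasible e x -> forall i, 1 <= nsum e (fun j => proj01 (x j)) i.
Proof.
move=> [x1 x0] i.
have [j /andP[jin xj1]|] := pickP [pred j | (j \in Omega e i) && (1 <= x j)].
  apply: le_trans (nsum_ge_mem jin _); first by rewrite proj01_ge1.
  by move=> j'; have /andP[] := proj01_in01 (x j').
move=> small; have := x1 i; rewrite adjA_mulE => /le_trans; apply.
rewrite le_eqVlt; apply/orP; left; apply/eqP; apply: eq_bigr => j jin.
by have /= := small j; rewrite jin /= => /negbT; rewrite -ltNge => /(proj01_id (x0 j)).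
Qed.

Section Dual.
Variables (R : realFieldType) (N : nat) (e : rel 'I_N) (delta : R).
Hypotheses (e_sym : forall i j, e i j = e j i) (delta_gt0 : 0 < delta).
Implicit Types x y l m : 'I_N -> R.

Definition alpha : R := delta / (2 * deg1 R e ^+ 2).
(* [kappa = deg1^2 / delta] bounds the Lipschitz constant of the dual gradient. *)
Local Notation kappa := (2 * alpha)^-1.

Lemma alpha_gt0 : 0 < alpha.
Proof. by rewrite divr_gt0 // mulr_gt0 // exprn_gt0 // deg1_gt0. Qed.

Lemma kappa_gt0 : 0 < kappa.
Proof. by rewrite invr_gt0 mulr_gt0 // alpha_gt0. Qed.

Lemma kappaE : kappa = deg1 R e ^+ 2 / delta.
Proof.
have := @deg1_gt0 R _ e; rewrite /alpha => D0.
by field; rewrite !gt_eqF ?exprn_gt0.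
Qed.

Definition reg_cost x : R := \sum_i (x i + delta / 2 * x i ^+ 2).

Definition lagr x l : R := reg_cost x + \sum_i l i * (1 - nsum e x i).

Definition in01 x := forall i, 0 <= x i <= 1.

Local Notation xopt l := (xhat e delta l).

Definition dual l : R := lagr (xopt l) l.

Lemma xhat_in01 l : in01 (xopt l).
Proof. by move=> i; apply: proj01_in01. Qed.

Lemma xhat_ge0 l i : 0 <= xopt l i.
Proof. by have /andP[] := xhat_in01 l i. Qed.

Lemma reg_cost_ge x : (forall i, 0 <= x i) -> lp_cost x <= reg_cost x.
Proof.
move=> x0; apply: ler_sum => i _.
by rewrite lerDl mulr_ge0 ?sqr_ge0 // divr_ge0 // ltW.
Qed.

Lemma lagr_shift x l m :
  lagr x m = lagr x l + \sum_i (m i - l i) * (1 - nsum e x i).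
Proof.
rewrite /lagr -addrA; congr (_ + _); rewrite -big_split /=.
by apply: eq_bigr => i _; ring.
Qed.

Lemma lagrE x l :
  lagr x l = \sum_i (x i + delta / 2 * x i ^+ 2 - x i * nsum e l i) + \sum_i l i.
Proof.
rewrite /lagr /reg_cost sumrB -(sum_mul_nsumC e_sym l x).
have -> : \sum_i l i * (1 - nsum e x i) = \sum_i l i - \sum_i l i * nsum e x i.
  by rewrite -sumrB; apply: eq_bigr => i _; ring.
ring.
Qed.

Lemma lagr_strong_min l y : in01 y ->
  delta / 2 * \sum_i (y i - xopt l i) ^+ 2 <= lagr y l - lagr (xopt l) l.
Proof.
move=> y01; rewrite !lagrE opprD addrACA subrr addr0 -sumrB mulr_sumr.
apply: ler_sum => i _; set c := delta^-1 * (nsum e l i - 1).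
have -> : nsum e l i = 1 + delta * c by rewrite /c; field; rewrite gt_eqF.
exact: proj01_strong_min.
Qed.

Lemma dual_le_lagr l y : in01 y -> dual l <= lagr y l.
Proof.
move=> y01; rewrite -subr_ge0; apply: le_trans (lagr_strong_min l y01).
by rewrite mulr_ge0 ?sumr_ge0 // => [|i _]; rewrite ?divr_ge0 ?sqr_ge0 ?ltW.
Qed.

Lemma dual_descent l m :
  lagr (xopt l) m - kappa * \sum_i (m i - l i) ^+ 2 <= dual m.
Proof.
set x := xopt l; set y := xopt m; pose h i := m i - l i.
have strong := lagr_strong_min l (xhat_in01 m); rewrite -/x -/y in strong.
have cross : \sum_i (y i - x i) * nsum e h i <=
    delta / 2 * \sum_i (y i - x i) ^+ 2 + kappa * \sum_i h i ^+ 2.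
  apply: le_trans (_ : _ <= delta / 2 * \sum_i (y i - x i) ^+ 2
                          + (\sum_i nsum e h i ^+ 2) / (2 * delta)) _.
    by rewrite mulr_sumr mulr_suml -big_split; apply: ler_sum => i _; apply: mulr_le_young.
  rewrite lerD2l kappaE ler_pdivrMr ?mulr_gt0 //; apply: le_trans (sum_sqr_nsum_le e_sym h) _.
  rewrite (_ : _ * _ * (2 * delta) = 2 * (deg1 R e ^+ 2 * \sum_i h i ^+ 2)).
    by rewrite ler_peMl ?ler1n // mulr_ge0 ?sqr_ge0 ?sumr_ge0 // => i _; rewrite sqr_ge0.
  by field; rewrite gt_eqF.
have gap : \sum_i h i * (1 - nsum e y i) - \sum_i h i * (1 - nsum e x i)
         = - \sum_i (y i - x i) * nsum e h i.
  rewrite -sumrB (sum_mul_nsumC e_sym (fun i => y i - x i) h) -sumrN.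
  by apply: eq_bigr => i _; rewrite nsumB; ring.
rewrite /dual -/y (lagr_shift y l m) (lagr_shift x l m).
by lra.
Qed.

Lemma lagr_le_reg_cost y l : (forall i, 1 <= nsum e y i) -> (forall i, 0 <= l i) ->
  lagr y l <= reg_cost y.
Proof.
move=> y1 l0; rewrite /lagr gerDl; apply: sumr_le0 => i _.
by rewrite mulr_ge0_le0 // subr_le0.
Qed.

Definition pstep l i : R := pos (l i + alpha * (1 - nsum e (xopt l) i)).

Lemma pstep_ge0 l i : 0 <= pstep l i.
Proof. exact: pos_ge0. Qed.

Lemma dual_pstep l y : (forall i, 0 <= y i) ->
  lagr (xopt l) y - kappa * \sum_i (y i - l i) ^+ 2 <= dual (pstep l).
Proof.
move=> y0; apply: le_trans (dual_descent l (pstep l)).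
rewrite (lagr_shift _ l y) (lagr_shift _ l (pstep l)) -!addrA lerD2l.
rewrite lerD2l !mulr_sumr -!sumrB; apply: ler_sum => i _.
by rewrite !(mulrC (_ - l i)); apply: pos_step_max; rewrite ?alpha_gt0.
Qed.

Lemma lagr_avg x (c d : R) l m : 0 < c + d ->
  c * lagr x l + d * lagr x m = (c + d) * lagr x (fun i => (c * l i + d * m i) / (c + d)).
Proof.
move=> cd0; rewrite /lagr !mulrDr.
have -> : (c + d) * \sum_i (c * l i + d * m i) / (c + d) * (1 - nsum e x i)
        = c * \sum_i l i * (1 - nsum e x i) + d * \sum_i m i * (1 - nsum e x i).
  rewrite !mulr_sumr -big_split /=.
  by apply: eq_bigr => i _; field; rewrite gt_eqF.
ring.
Qed.

End Dual.

Lemma xbar_ge0 (R : realFieldType) N (e : rel 'I_N) (delta alpha : R) k j :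
  0 <= xbar e delta alpha k j.
Proof.
elim: k j => [|k IH] j; rewrite /xbar /=.
  by rewrite mulr0 add0r mulr_ge0 ?divr_ge0 ?xhat_ge0.
by apply: addr_ge0; apply: mulr_ge0; rewrite ?divr_ge0 ?xhat_ge0 //; apply: IH.
Qed.

Lemma alg_x_feasible (R : realFieldType) N (e : rel 'I_N) (delta alpha : R) k :
  lp_feasible e (alg_x e delta alpha k).
Proof.
have xb0 := xbar_ge0 e delta alpha k; set xb := xbar e delta alpha k in xb0 *.
split=> i; last by rewrite addr_ge0 ?pos_ge0.
rewrite adjA_mulE /nsum big_split /= -!/(nsum e _ i).
have := @nsum_ge_mem R N e (fun j => pos (1 - nsum e xb j)) i i (Omega_self e i) (fun j => pos_ge0 _).
by have := le_pos (1 - nsum e xb i); lra.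
Qed.

Section Algorithm.
Variables (R : realFieldType) (N : nat) (e : rel 'I_N) (delta : R).
Hypotheses (e_sym : forall i j, e i j = e j i) (delta_gt0 : 0 < delta).
Implicit Types l : 'I_N -> R.

Local Notation alpha := (alpha e delta).
Local Notation kappa := (2 * alpha)^-1.
Local Notation st k := (alg_state_at e delta alpha k).
Local Notation lagr := (lagr e delta).
Local Notation dual := (dual e delta).
Local Notation reg_cost := (reg_cost delta).
Local Notation pstep := (pstep e delta).

Definition lam_at k := st_lambda (st k).
Definition xhat_at k := xhat e delta (lam_at k).
Definition z_at k := st_z (st k.+1).
Local Notation xbar_at k := (xbar e delta alpha k).

(* The averaging weights of Algorithm 1 are [Acoef k / Acoef k.+1] and
   [acoef k.+1 / Acoef k.+1], see [weight_oldE] and [weight_newE]. *)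
Definition Acoef k : R := (k.+1)%:R * (k.+2)%:R / 4.
Definition acoef k : R := (k.+1)%:R / 2.

Lemma lam_at0 i : lam_at 0 i = 0.
Proof. by []. Qed.

Lemma z_at0 i : z_at 0 i = acoef 0 * (1 - nsum e (xhat_at 0) i).
Proof. by rewrite /z_at /= add0r. Qed.

Lemma z_atS k i : z_at k.+1 i = z_at k i + acoef k.+1 * (1 - nsum e (xhat_at k.+1) i).
Proof. by []. Qed.

Lemma xbar0 j : xbar_at 0 j = xhat_at 0 j.
Proof. by rewrite /xbar /= mulr0 add0r divff ?mul1r // pnatr_eq0. Qed.

Lemma xbarS k j :
  xbar_at k.+1 j = (k.+1)%:R / (k.+3)%:R * xbar_at k j + 2 / (k.+3)%:R * xhat_at k.+1 j.
Proof. by []. Qed.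

Lemma Acoef_gt0 k : 0 < Acoef k.
Proof. by rewrite divr_gt0 ?mulr_gt0 ?ltr0n. Qed.

Lemma acoef_gt0 k : 0 < acoef k.
Proof. by rewrite divr_gt0 ?ltr0n. Qed.

Lemma Acoef0 : Acoef 0 = acoef 0.
Proof. by rewrite /Acoef /acoef; field. Qed.

Lemma AcoefS k : Acoef k + acoef k.+1 = Acoef k.+1.
Proof. by rewrite /Acoef /acoef -!natr1; field. Qed.

Lemma acoef_sqr_le k : acoef k ^+ 2 <= Acoef k.
Proof.
rewrite /Acoef /acoef -!natr1 -subr_ge0.
have k0 : 0 <= k%:R :> R := ler0n _ k.
rewrite (_ : _ - _ = (k%:R + 1) / 4); last by field.
by rewrite divr_ge0 //; lra.
Qed.

Lemma weight_oldE k : (k.+1)%:R / (k.+3)%:R = Acoef k / Acoef k.+1 :> R.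
Proof.
have k0 : 0 <= k%:R :> R := ler0n _ k.
by rewrite /Acoef; field; rewrite !gt_eqF //; lra.
Qed.

Lemma weight_newE k : 2 / (k.+3)%:R = acoef k.+1 / Acoef k.+1 :> R.
Proof.
have k0 : 0 <= k%:R :> R := ler0n _ k.
by rewrite /Acoef /acoef; field; rewrite !gt_eqF //; lra.
Qed.

Definition center_at k i : R := alpha * pos (z_at k i).

Lemma center_at_ge0 k i : 0 <= center_at k i.
Proof. by rewrite mulr_ge0 ?pos_ge0 ?(ltW (alpha_gt0 e delta_gt0)). Qed.

Lemma lam_atS k i : lam_at k.+1 i =
  (k.+1)%:R / (k.+3)%:R * pstep (lam_at k) i + 2 / (k.+3)%:R * center_at k i.
Proof. by []. Qed.

Definition estimate k l : R :=
  \sum_(m < k.+1) acoef m * reg_cost (xhat_at m)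
  + \sum_i (l i * z_at k i - kappa * l i ^+ 2).

Lemma estimateS k l :
  estimate k.+1 l = estimate k l + acoef k.+1 * lagr (xhat_at k.+1) l.
Proof.
rewrite /estimate /lagr big_ord_recr /= mulrDr.
have -> : \sum_i (l i * z_at k.+1 i - kappa * l i ^+ 2) =
   \sum_i (l i * z_at k i - kappa * l i ^+ 2)
   + acoef k.+1 * \sum_i l i * (1 - nsum e (xhat_at k.+1) i).
  by rewrite mulr_sumr -big_split /=; apply: eq_bigr => i _; rewrite z_atS; ring.
ring.
Qed.

Lemma estimate_le_center k l : (forall i, 0 <= l i) ->
  estimate k l <= estimate k (center_at k) - kappa * \sum_i (l i - center_at k i) ^+ 2.
Proof.
move=> l0; rewrite /estimate -addrA lerD2l mulr_sumr -sumrB.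
by apply: ler_sum => i _; apply: pos_quad_max; rewrite ?alpha_gt0.
Qed.

Lemma estimate0_le l : (forall i, 0 <= l i) ->
  estimate 0 l <= Acoef 0 * dual (pstep (lam_at 0)).
Proof.
move=> l0; have A0 := Acoef_gt0 0.
apply: le_trans (ler_wpM2l (ltW A0) (dual_pstep e_sym delta_gt0 (lam_at 0) l0)).
rewrite /estimate /lagr big_ord1 -Acoef0 mulrBr mulrDr !mulr_sumr -addrA lerD2l -sumrB.
apply: ler_sum => i _; rewrite z_at0 lam_at0 subr0 -Acoef0 -subr_ge0.
rewrite (_ : _ - _ = kappa * l i ^+ 2 / 2); last by rewrite /Acoef /xhat_at; set c := kappa; field.
by rewrite divr_ge0 ?mulr_ge0 ?sqr_ge0 ?(ltW (kappa_gt0 e delta_gt0)).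
Qed.

Lemma estimate_le_step k :
  (forall l, (forall i, 0 <= l i) -> estimate k l <= Acoef k * dual (pstep (lam_at k))) ->
  forall l, (forall i, 0 <= l i) ->
  estimate k.+1 l <= Acoef k.+1 * dual (pstep (lam_at k.+1)).
Proof.
move=> IH l l0; rewrite -AcoefS.
set A := Acoef k; set a := acoef k.+1; set M := pstep (lam_at k).
set x := xhat_at k.+1; set zeta := center_at k.
have A0 : 0 < A := Acoef_gt0 k; have a0 : 0 < a := acoef_gt0 k.+1.
have Aa0 : 0 < A + a by rewrite addr_gt0.
pose y i := (A * M i + a * l i) / (A + a).
have y0 i : 0 <= y i.
  by rewrite divr_ge0 ?(ltW Aa0) // addr_ge0 // mulr_ge0 ?pstep_ge0 ?(ltW A0) ?(ltW a0).
have lam_avg i : lam_at k.+1 i = (A * M i + a * zeta i) / (A + a).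
  by rewrite lam_atS weight_oldE weight_newE -AcoefS -/A -/a -/M -/zeta; field; rewrite gt_eqF.
have dist : (A + a) * \sum_i (y i - lam_at k.+1 i) ^+ 2 <= \sum_i (l i - zeta i) ^+ 2.
  rewrite mulr_sumr; apply: ler_sum => i _; rewrite lam_avg.
  by apply: sqr_avg_le; rewrite // /A /a AcoefS acoef_sqr_le.
have C := estimate_le_center k l0; rewrite -/zeta in C.
have IHc := IH zeta (center_at_ge0 k); rewrite -/A -/M in IHc.
have Mx : A * dual M <= A * lagr x M.
  apply: ler_wpM2l; first exact: ltW.
  by apply: (dual_le_lagr e_sym delta_gt0); apply: xhat_in01.
have avg : A * lagr x M + a * lagr x l = (A + a) * lagr x y by rewrite lagr_avg.
have step := dual_pstep e_sym delta_gt0 (lam_at k.+1) y0.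
rewrite -/(xhat_at _) -/x in step.
have kd := ler_wpM2l (ltW (kappa_gt0 e delta_gt0)) dist.
rewrite estimateS -/x -/a; apply: le_trans (ler_wpM2l (ltW Aa0) step).
rewrite mulrBr mulrCA.
by lra.
Qed.

Lemma estimate_le k l : (forall i, 0 <= l i) ->
  estimate k l <= Acoef k * dual (pstep (lam_at k)).
Proof. by elim: k l => [|k IH]; [apply: estimate0_le | apply: estimate_le_step]. Qed.

Lemma lp_cost_lin (c d : R) (u v : 'I_N -> R) :
  lp_cost (fun j => c * u j + d * v j) = c * lp_cost u + d * lp_cost v.
Proof. by rewrite /lp_cost big_split /= -!mulr_sumr. Qed.

Lemma z_atE k i : z_at k i = Acoef k * (1 - nsum e (xbar_at k) i).
Proof.
elim: k i => [|k IH] i.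
  by rewrite z_at0 Acoef0 /nsum (eq_bigr _ (fun j _ => xbar0 j)).
have -> : nsum e (xbar_at k.+1) i = nsum e (fun j =>
    Acoef k / Acoef k.+1 * xbar_at k j + acoef k.+1 / Acoef k.+1 * xhat_at k.+1 j) i.
  by apply: eq_bigr => j _; rewrite xbarS weight_oldE weight_newE.
rewrite z_atS IH nsum_lin -AcoefS; field.
by rewrite gt_eqF // AcoefS Acoef_gt0.
Qed.

Lemma cost_xbar_le k :
  Acoef k * lp_cost (xbar_at k) <= \sum_(m < k.+1) acoef m * reg_cost (xhat_at m).
Proof.
elim: k => [|k IH].
  rewrite big_ord1 -Acoef0 /lp_cost (eq_bigr _ (fun j _ => xbar0 j)).
  by rewrite ler_wpM2l ?(ltW (Acoef_gt0 0)) ?reg_cost_ge // => j; apply: xhat_ge0.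
have -> : lp_cost (xbar_at k.+1) = lp_cost (fun j =>
    Acoef k / Acoef k.+1 * xbar_at k j + acoef k.+1 / Acoef k.+1 * xhat_at k.+1 j).
  by apply: eq_bigr => j _; rewrite xbarS weight_oldE weight_newE.
have cancel (c x : R) : Acoef k.+1 * (c / Acoef k.+1 * x) = c * x.
  by field; rewrite gt_eqF ?Acoef_gt0.
rewrite lp_cost_lin mulrDr !cancel big_ord_recr /=.
by rewrite lerD // ler_wpM2l ?(ltW (acoef_gt0 _)) ?reg_cost_ge // => j; apply: xhat_ge0.
Qed.

Lemma xbar_violation_le k y : in01 y -> (forall i, 1 <= nsum e y i) ->
  lp_cost (xbar_at k) + Acoef k * alpha / 2 * \sum_i pos (1 - nsum e (xbar_at k) i) ^+ 2
  <= reg_cost y.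
Proof.
move=> y01 y1; have A0 := Acoef_gt0 k; have a0 := alpha_gt0 e delta_gt0.
pose v i := pos (1 - nsum e (xbar_at k) i).
pose l i := Acoef k * alpha * v i.
have l0 i : 0 <= l i by apply: mulr_ge0; [apply: mulr_ge0; apply: ltW | apply: pos_ge0].
have bound : estimate k l <= Acoef k * reg_cost y.
  apply: le_trans (estimate_le k l0) _; rewrite ler_wpM2l ?(ltW A0) //.
  apply: le_trans (dual_le_lagr e_sym delta_gt0 _ y01) _.
  by rewrite lagr_le_reg_cost // => i; apply: pstep_ge0.
rewrite -(ler_pM2l A0) mulrDr; apply: le_trans bound; rewrite /estimate.
apply: lerD; first exact: cost_xbar_le.
rewrite !mulr_sumr le_eqVlt; apply/orP; left; apply/eqP; apply: eq_bigr => i _.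
rewrite z_atE /l -/(v i).
have -> : Acoef k * alpha * v i * (Acoef k * (1 - nsum e (xbar_at k) i))
        = Acoef k * Acoef k * alpha * (v i * (1 - nsum e (xbar_at k) i)) by ring.
by rewrite pos_mulr -/(v i); field; rewrite gt_eqF.
Qed.

Lemma cost_alg_x_le k y : in01 y -> (forall i, 1 <= nsum e y i) ->
  lp_cost (alg_x e delta alpha k) <= reg_cost y + N%:R / (2 * (Acoef k * alpha)).
Proof.
move=> y01 y1; have A0 := Acoef_gt0 k; have a0 := alpha_gt0 e delta_gt0.
set s := Acoef k * alpha / 2; have s0 : 0 < s by apply: divr_gt0; [apply: mulr_gt0 | ].
have repair : \sum_i pos (1 - nsum e (xbar_at k) i)
    <= s * \sum_i pos (1 - nsum e (xbar_at k) i) ^+ 2 + N%:R / (2 * (Acoef k * alpha)).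
  rewrite (_ : N%:R / _ = \sum_(i < N) (4 * s)^-1); last first.
    by rewrite sumr_const card_ord -mulr_natl /s; field; rewrite !gt_eqF.
  rewrite mulr_sumr -big_split; apply: ler_sum => i _.
  have := mulr_le_young (pos (1 - nsum e (xbar_at k) i)) 1 (mulr_gt0 (ltr0n _ 2) s0).
  rewrite mulr1 expr1n => /le_trans; apply; rewrite /= (_ : 2 * s / 2 = s); last by field.
  by rewrite (_ : 1 / (2 * (2 * s)) = (4 * s)^-1) //; field; rewrite gt_eqF.
have := xbar_violation_le k y01 y1; rewrite -/s.
have -> : lp_cost (alg_x e delta alpha k)
        = lp_cost (xbar_at k) + \sum_i pos (1 - nsum e (xbar_at k) i).
  by rewrite /lp_cost -big_split.
by lra.
Qed.

End Algorithm.

Lemma reg_cost_proj01_le (R : realFieldType) N (delta : R) (x : 'I_N -> R) :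
  0 < delta -> (forall i, 0 <= x i) ->
  reg_cost delta (fun i => proj01 (x i)) <= (1 + delta / 2) * lp_cost x.
Proof.
move=> delta_gt0 x0; rewrite /reg_cost /lp_cost mulr_sumr; apply: ler_sum => i _.
have /andP[y0 y1] := proj01_in01 (x i); have yx := proj01_le (x0 i).
have y2 : proj01 (x i) ^+ 2 <= x i by rewrite expr2 (le_trans _ yx) // ler_piMr.
have : delta / 2 * proj01 (x i) ^+ 2 <= delta / 2 * x i by apply: ler_wpM2l y2; rewrite divr_ge0 // ltW.
by lra.
Qed.

Lemma rel_gap_le (R : realFieldType) (c n x d D K : R) :
  0 < d -> 1 <= D -> 1 <= K -> 0 <= c -> n <= D * c ->
  x <= (1 + d / 2) * c + n * (4 * D ^+ 2) / (K * (K + 1) * d) ->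
  (x - c) / c <= 32 * D ^+ 3 * (1 + d^-1) / K ^+ 2 + d / 2.
Proof.
move=> d0 D1 K1 c0 nc xc.
have D0 : 0 < D by lra.
have K0 : 0 < K by lra.
set P := D ^+ 3 / K ^+ 2.
have P0 : 0 <= P by rewrite divr_ge0 ?exprn_ge0 ?ltW.
have rhsE : 32 * D ^+ 3 * (1 + d^-1) / K ^+ 2 = P * (32 * (1 + d^-1)).
  by rewrite /P; field; rewrite !gt_eqF.
have [->|cn0] := eqVneq c 0.
  (* the relative gap is [_ / 0 = 0] *)
  have di : 0 <= d^-1 by rewrite invr_ge0 ltW.
  rewrite invr0 mulr0 rhsE; apply: addr_ge0; first apply: mulr_ge0 => //; lra.
have c_gt0 : 0 < c by rewrite lt_def cn0.
have KKd : 0 < K * (K + 1) * d by apply: mulr_gt0 => //; apply: mulr_gt0; lra.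
have gapB : n * (4 * D ^+ 2) / (K * (K + 1) * d) <= P * (4 * K / ((K + 1) * d)) * c.
  rewrite (_ : _ * c = D * c * (4 * D ^+ 2) / (K * (K + 1) * d)); last first.
    by rewrite /P; field; rewrite !gt_eqF //; lra.
  apply: ler_wpM2r; first by rewrite invr_ge0 ltW.
  by apply: ler_wpM2r nc; rewrite mulr_ge0 // exprn_ge0 // ltW.
have factor : 4 * K / ((K + 1) * d) <= 32 * (1 + d^-1).
  rewrite (_ : 4 * K / ((K + 1) * d) = 4 * d^-1 - 4 / ((K + 1) * d)); last first.
    by field; rewrite !gt_eqF //; lra.
  have : 0 <= 4 / ((K + 1) * d) by rewrite divr_ge0 ?mulr_ge0 ?ltW //; lra.
  have : 0 <= d^-1 by rewrite invr_ge0 ltW.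
  by lra.
have := ler_wpM2r (ltW c_gt0) (ler_wpM2l P0 factor).
rewrite rhsE ler_pdivrMr // mulrDl.
move=> ?; lra.
Qed.

Theorem theorem1 (R : realFieldType) (N : nat) (e : rel 'I_N)
  (xs : 'I_N -> R) (delta : R) :
  simple_graph e ->
  lp_optimal e xs ->
  0 < delta ->
  let alpha := delta / (2 * ((dmax e)%:R + 1) ^+ 2) in
  forall k : nat,
    lp_feasible e (alg_x e delta alpha k) /\
    (lp_cost (alg_x e delta alpha k) - lp_cost xs) / lp_cost xs
      <= 32 * ((dmax e)%:R + 1) ^+ 3 * (1 + delta^-1) / ((k%:R + 1) ^+ 2)
         + delta / 2.
Proof.
move=> [e_sym _] [xs_feas _] delta_gt0 a k; rewrite /a -/(alpha e delta) {a}.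
split; first exact: alg_x_feasible.
have := cost_alg_x_le e_sym delta_gt0 k (fun i => proj01_in01 (xs i)) (nsum_proj01_ge1 xs_feas).
have -> : N%:R / (2 * (Acoef R k * alpha e delta))
    = N%:R * (4 * deg1 R e ^+ 2) / ((k%:R + 1) * (k%:R + 1 + 1) * delta).
  have := deg1_gt0 R e; have := ler0n R k.
  by rewrite /Acoef /alpha -!natr1 => *; field; rewrite !gt_eqF //; lra.
move/le_trans/(_ (lerD (reg_cost_proj01_le delta_gt0 xs_feas.2) (lexx _))) => cost_x.
apply: rel_gap_le (card_le_cost e_sym xs_feas) cost_x => //.
- exact: deg1_ge1.
- by rewrite lerDr.
- by apply: sumr_ge0 => i _; apply: xs_feas.2.
Qed.
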